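(* There is an absolute constant $C>0$ such that the following holds. Let $(a_n)_{n\ge1}$ be real with $|a_n|\le1$ and $\gamma_n=\operatorname{sign}(a_n)$. Let $\ell\in\{0,1,2,3\}$, $k\ge1$, $q=q^{(\ell)}_k$, let $M$ be an integer with $1\le M\le L^{(\ell)}_k$, and let $r,c$ be integers in $[0,q]$. Let $x\in P^{(\ell)}\times\{-1,0,1\}^{\mathbb Z}$ satisfy, for every integer $n$ with $q\le n<q^{(\ell)}_{k+1}$, $$\Pi_1x(n)=(\sigma^{-r}s^{(\ell)}_k)(n),\qquad \Pi_2x(n)=\gamma(qn+c).$$ Then $$\Big|\frac1{qM}\sum_{n=1}^{qM}g(T^nx)a(n)-A^{q,M}_{r,c}\Big|\le C\frac{q}{M}.$$
   Context: Let $\tau:\mathbb N\to(0,\infty)$ be non-increasing with $\tau(n)\to0$. Fix integers $2\le q_1<q_2<\cdots$ such that for every $k\ge1$: (i) $q_{k+1}>q_k^4+3q_k$; (ii) $\tau(\lceil q_{k+1}/3\rceil)<\frac1{16q_k}$. For $k\ge1$ put $q^{(0)}_k=q_{2k}$, $q^{(1)}_k=q_{2k+1}$, $q^{(2)}_k=q^{(0)}_k-1$, $q^{(3)}_k=q^{(1)}_k-1$, and $L^{(i)}_k=\lfloor q^{(i)}_{k+1}/(3q^{(i)}_k)\rfloor$. Let $s^{(i)}_k\in\{-1,0,1\}^{\mathbb N}$ (indices $n\ge1$) be given by $s^{(i)}_k(n)=1$ if $n=jq^{(i)}_k$ with $1\le j\le L^{(i)}_k$, $s^{(i)}_k(n)=-1$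 if $n=jq^{(i)}_k$ with $L^{(i)}_k<j\le2L^{(i)}_k$, and $s^{(i)}_k(n)=0$ otherwise. For $w\in\{-1,0,1\}^{\mathbb N}$ and $p\in\mathbb N_0$ let $\sigma^{-p}w$ be defined by $(\sigma^{-p}w)(n)=0$ for $1\le n\le p$ and $(\sigma^{-p}w)(n)=w(n-p)$ for $n>p$. For $l\le m$ write $w|_l^m=(w_l,\dots,w_m)$. Let $R^{(i)}_k=\{(\sigma^{-p}s^{(i)}_k)|_{q^{(i)}_k}^{q^{(i)}_{k+1}-1}:p=0,1,\dots,q^{(i)}_k\}$ and $P^{(i)}=\{y\in\{-1,0,1\}^{\mathbb N}: y(n)=0\text{ for }1\le n<q^{(i)}_1,\ y|_{q^{(i)}_k}^{q^{(i)}_{k+1}-1}\in R^{(i)}_k\text{ for all }k\ge1\}$. Let $Z=\{-1,0,1\}^{\mathbb N}\times\{-1,0,1\}^{\mathbb Z}$, with coordinate projections $\Pi_1,\Pi_2$; $\sigma$ is the left shift $(\sigma u)_m=u_{m+1}$ (invertible on $\{-1,0,1\}^{\mathbb Z}$); $T:Z\to Z$, $T(y,z)=(\sigma y,\sigma^{y_1}z)$; $g:Z\to\{-1,0,1\}$, $g(y,z)=z_0$. For integers $q,M\ge1$ and $r,c\in[0,q]$ set $$A^{q,M}_{r,c}=\frac1{qM}\sum_{b=r}^{q-1+r}\sum_{n=1}^M\gamma(qn+c)\,a(qn+b).$$ *)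

From HB Require Import structures.
From mathcomp Require Import all_boot all_order all_algebra.
From mathcomp Require Import all_classical all_reals all_analysis.
Set Implicit Arguments. Unset Strict Implicit. Unset Printing Implicit Defensive.
Import Order.TTheory GRing.Theory Num.Theory.
Import numFieldNormedType.Exports.
Local Open Scope ring_scope.

(* Sequences in {-1,0,1}^N are functions nat -> int; only indices n >= 1 are
   meaningful (index 0 is ignored).  Sequences in {-1,0,1}^Z are int -> int. *)

Definition qseq (q : nat -> nat) (l k : nat) : nat :=
  match l with
  | 0 => q (2 * k)%N
  | 1 => q (2 * k + 1)%N
  | 2 => (q (2 * k) - 1)%N
  | _ => (q (2 * k + 1) - 1)%N
  end.

Definition Lseq (q : nat -> nat) (l k : nat) : nat :=
  (qseq q l k.+1 %/ (3 * qseq q l k))%N.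

Definition sseq (q : nat -> nat) (l k : nat) (n : nat) : int :=
  let qq := qseq q l k in
  let L := Lseq q l k in
  if (0 < n)%N && (qq %| n)%N then
    let j := (n %/ qq)%N in
    if (1 <= j <= L)%N then 1
    else if (L < j <= 2 * L)%N then -1 else 0
  else 0.

Definition shiftR (p : nat) (w : nat -> int) (n : nat) : int :=
  if (n <= p)%N then 0 else w (n - p)%N.

Definition inR (q : nat -> nat) (l k : nat) (y : nat -> int) : Prop :=
  exists p : nat, (p <= qseq q l k)%N /\
    forall n : nat, (qseq q l k <= n < qseq q l k.+1)%N ->
      y n = shiftR p (sseq q l k) n.

Definition trit (v : int) : bool := [|| v == -1, v == 0 | v == 1].

Definition inP (q : nat -> nat) (l : nat) (y : nat -> int) : Prop :=
  (forall n : nat, (1 <= n)%N -> trit (y n)) /\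
  (forall n : nat, (1 <= n < qseq q l 1)%N -> y n = 0) /\
  (forall k : nat, (1 <= k)%N -> inR q l k y).

Definition Tmap (x : (nat -> int) * (int -> int)) : (nat -> int) * (int -> int) :=
  (fun m => x.1 m.+1, fun j => x.2 (j + x.1 1%N)).

Definition gfun (x : (nat -> int) * (int -> int)) : int := x.2 0.

Definition gam (R : realType) (a : nat -> R) (n : nat) : int := sgz (a n).

Definition Aqm (R : realType) (a : nat -> R) (q M r c : nat) : R :=
  ((q * M)%:R)^-1 *
  \sum_(r <= b < q + r) \sum_(1 <= n < M.+1)
     (gam a (q * n + c))%:~R * a (q * n + b)%N.

From HB Require Import structures.
From mathcomp Require Import all_boot all_order all_algebra.
From mathcomp Require Import all_classical all_reals all_analysis.
From mathcomp Require Import zify ring.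
Import Order.TTheory GRing.Theory Num.Theory.
Import numFieldNormedType.Exports.
Local Open Scope ring_scope.

(* Along the orbit of x the first coordinate runs through the level-k pattern
   σ^{-r} s_k, preceded by the lower-level patterns, whose ±1 entries cancel.
   Hence after n steps the second coordinate has been shifted by ⌊(n - r)/q⌋
   as long as q² + q + r ≤ n ≤ qM, i.e. g(Tⁿx) = γ(q⌊(n - r)/q⌋ + c).
   Writing n = qm + b turns the double sum A^{q,M}_{r,c} into the sum of these
   same terms over q + r ≤ n < qM + q + r.  The two averages therefore differ
   in O(q²) terms of size at most 2, an error O(q²)/(qM) = O(q/M). *)

(* [tent L t] is the sum of the first [t] nonzero entries of [s_k]:
   [L] ones followed by [L] minus ones. *)
Definition tent (L t : nat) : int := (minn t L)%:Z - (minn t (2 * L) - L)%N%:Z.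

Lemma tent0 L : tent L 0 = 0.
Proof. rewrite /tent; lia. Qed.

Lemma tent_id L t : (t <= L)%N -> tent L t = t.
Proof. rewrite /tent; lia. Qed.

Lemma tent_end L t : (2 * L <= t)%N -> tent L t = 0.
Proof. rewrite /tent; lia. Qed.

Section LevelPattern.
Variables (q : nat -> nat) (l k p : nat).
Let Q := qseq q l k.
Hypothesis Q_gt0 : (0 < Q)%N.

Lemma sum_shiftR_sseq n :
  \sum_(1 <= m < n.+1) shiftR p (sseq q l k) m = tent (Lseq q l k) ((n - p) %/ Q).
Proof.
elim: n => [|n IH]; first by rewrite big_geq // sub0n div0n tent0.
rewrite big_nat_recr //= IH /shiftR.
case: (leqP n.+1 p) => hp; first by rewrite addr0; congr tent; congr divn; lia.
have -> : (n.+1 - p = (n - p).+1)%N by lia.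
rewrite /sseq /= -/Q divnS //.
case: (Q %| (n - p).+1)%N => /=; last by rewrite addr0.
rewrite /tent add1n; set L := Lseq q l k.
case: ifP => h1; first lia.
case: ifP => h2; lia.
Qed.

Hypothesis p_le : (p <= Q)%N.

Lemma sum_shiftR_sseq_head : \sum_(1 <= m < Q) shiftR p (sseq q l k) m = 0.
Proof.
rewrite -(prednK Q_gt0) sum_shiftR_sseq divn_small ?tent0 //; lia.
Qed.

Lemma sum_shiftR_sseq_level :
  (3 * Q + 3 <= qseq q l k.+1)%N ->
  \sum_(Q <= m < qseq q l k.+1) shiftR p (sseq q l k) m = 0.
Proof.
move=> Q'_ge; set Q' := qseq q l k.+1 in Q'_ge *.
have whole : \sum_(1 <= m < Q') shiftR p (sseq q l k) m = 0.
  rewrite -(@prednK Q'); last lia.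
  rewrite sum_shiftR_sseq tent_end //; set L := Lseq q l k.
  have LQ : (L * (3 * Q) <= Q')%N by exact: leq_trunc_div.
  rewrite leq_divRL // -mulnA; move: LQ; rewrite mulnCA; lia.
by move: whole; rewrite (@big_cat_nat _ _ _ Q) //= ?sum_shiftR_sseq_head ?add0r //; lia.
Qed.

End LevelPattern.

Lemma qseq_growth (q : nat -> nat) (l k : nat) :
  (2 <= q 1)%N -> (forall k, (1 <= k)%N -> (q k < q k.+1)%N) ->
  (forall k, (1 <= k)%N -> (q k ^ 4 + 3 * q k < q k.+1)%N) ->
  (l < 4)%N -> (1 <= k)%N ->
  (0 < qseq q l k)%N /\ (3 * qseq q l k + 3 <= qseq q l k.+1)%N.
Proof.
move=> q1 q_incr q_growth l4 k1.
have q_ge2 j : (1 <= j)%N -> (2 <= q j)%N.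
  elim: j => // [[|j]] IH _ //; have := q_incr j.+1 erefl; have := IH erefl; lia.
have q_skip j : (1 <= j)%N -> (3 * q j + 3 <= q j.+2)%N.
  move=> j1; have qj2 := q_ge2 j j1.
  have : (q j ^ 1 <= q j ^ 4)%N by apply: leq_pexp2l; lia.
  rewrite expn1; have := q_growth j j1; have := q_incr j.+1 erefl; lia.
have := q_skip (2 * k)%N ltac:(lia); have := q_skip (2 * k).+1 ltac:(lia).
have := q_ge2 (2 * k)%N ltac:(lia); have := q_ge2 (2 * k).+1 ltac:(lia).
have e : (2 * k.+1 = (2 * k).+2)%N by lia.
by case: l l4 => [|[|[|[|l]]]] // _; rewrite /qseq e ?addn1; lia.
Qed.

Lemma iter_Tmap (y : nat -> int) (z : int -> int) n :
  (iter n Tmap (y, z)).1 =1 (fun m => y (m + n)%N) /\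
  (iter n Tmap (y, z)).2 =1 (fun j => z (j + \sum_(1 <= m < n.+1) y m)).
Proof.
elim: n => [|n [IH1 IH2]]; first by split=> [m|j] /=; rewrite ?addn0 // big_geq // addr0.
split=> [m|j] /=; first by rewrite IH1 addSnnS.
by rewrite IH2 IH1 [in RHS]big_nat_recr //= add1n addrAC -addrA.
Qed.

Section PatternOrbit.
Variables (q : nat -> nat) (l : nat) (y : nat -> int).
Hypothesis level_growth :
  forall k, (1 <= k)%N -> (0 < qseq q l k)%N /\ (3 * qseq q l k + 3 <= qseq q l k.+1)%N.
Hypothesis yP : inP q l y.

Lemma inP_sum_head k : (1 <= k)%N -> \sum_(1 <= m < qseq q l k) y m = 0.
Proof.
case: yP => _ [y_head y_levels]; elim: k => // [[|k]] IH _.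
  by rewrite big_nat big1 // => m /y_head.
have [Q0 Q'_ge] := level_growth k.+1 erefl.
rewrite (@big_cat_nat _ _ _ (qseq q l k.+1)) //= ?IH // ?add0r; last lia.
have [p [p_le y_eq]] := y_levels k.+1 erefl.
rewrite (eq_big_nat _ _ (F2 := shiftR p (sseq q l k.+1))); last by move=> m /y_eq.
exact: sum_shiftR_sseq_level.
Qed.

Variables (k r : nat).
Let Q := qseq q l k.
Hypotheses (k1 : (1 <= k)%N) (r_le : (r <= Q)%N).
Hypothesis y_level :
  forall n, (Q <= n < qseq q l k.+1)%N -> y n = shiftR r (sseq q l k) n.

Lemma inP_partial_sum n : (Q <= n.+1 <= qseq q l k.+1)%N ->
  \sum_(1 <= m < n.+1) y m = tent (Lseq q l k) ((n - r) %/ Q).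
Proof.
move=> /andP[n_lo n_hi]; have [Q0 _] := level_growth k k1.
rewrite -sum_shiftR_sseq //.
rewrite !(@big_cat_nat _ _ _ Q 1 n.+1) //= inP_sum_head // sum_shiftR_sseq_head // !add0r.
by apply: eq_big_nat => m /andP[m_lo m_hi]; apply: y_level; rewrite m_lo /=; apply: leq_trans n_hi.
Qed.

Variables (z : int -> int) (w : nat -> int).
Hypothesis z_level : forall m, (Q <= m < qseq q l k.+1)%N -> z m = w m.

Lemma gfun_iter_level n :
  (Q * Q + Q + r <= n <= Q * Lseq q l k)%N ->
  gfun (iter n Tmap (y, z)) = w ((n - r) %/ Q).
Proof.
move=> /andP[n_lo n_hi]; have [Q0 _] := level_growth k k1.
have LQ : (Lseq q l k * (3 * Q) <= qseq q l k.+1)%N by exact: leq_trunc_div.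
have m_hi : ((n - r) %/ Q <= Lseq q l k)%N.
  by rewrite -(mulKn (Lseq q l k) Q0) leq_div2r //; lia.
have m_lo : (Q <= (n - r) %/ Q)%N by rewrite leq_divRL //; lia.
rewrite /gfun (iter_Tmap y z n).2 add0r inP_partial_sum; last first.
  by move: LQ; rewrite mulnCA; lia.
have L_le : (Lseq q l k <= Lseq q l k * Q)%N by rewrite leq_pmulr.
by rewrite tent_id // z_level // m_lo; move: LQ; rewrite mulnCA; lia.
Qed.

End PatternOrbit.

Lemma sum_blocks_reindex (V : nmodType) (f : nat -> nat -> V) (Q M r : nat) :
  (0 < Q)%N ->
  \sum_(r <= b < Q + r) \sum_(1 <= m < M.+1) f m (Q * m + b)%N
  = \sum_(Q + r <= n < Q * M + Q + r) f ((n - r) %/ Q)%N n.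
Proof.
move=> Q0; rewrite exchange_big_nat /=.
have block m : \sum_(r <= b < Q + r) f m (Q * m + b)%N
               = \sum_(Q * m + r <= n < Q * m + Q + r) f ((n - r) %/ Q)%N n.
  rewrite (addnC (Q * m) r) big_addn; have -> : (Q * m + Q + r - Q * m = Q + r)%N by lia.
  apply: eq_big_nat => b b_range; rewrite (addnC b).
  have -> : (Q * m + b - r = m * Q + (b - r))%N by lia.
  by rewrite divnMDl // divn_small ?addn0 //; lia.
elim: M => [|M IH]; first by rewrite !big_geq //; lia.
rewrite big_nat_recr //= IH block.
have -> : (Q * M.+1 + r = Q * M + Q + r)%N by rewrite mulnS; lia.
by rewrite -big_cat_nat //; lia.
Qed.

Lemma big_nat_window (V : nmodType) (F : nat -> V) (a b T : nat) :
  (a <= b <= T)%N ->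
  \sum_(a <= n < b) F n = \sum_(0 <= n < T) (if (a <= n < b)%N then F n else 0).
Proof.
move=> /andP[ab bT].
rewrite (big_nat_widenl _ _ _ _ _ (leq0n a)) (big_nat_widen _ _ _ _ _ bT) big_mkcond.
by apply: eq_big_nat => n _; rewrite /= andbC.
Qed.

Lemma norm_sum_sub_agree (R : numDomainType) (u v : nat -> R) (K N T : nat) :
  (forall n, `|u n| <= 1) -> (forall n, `|v n| <= 1) ->
  (forall n, (K <= n <= N)%N -> u n = v n) ->
  `|\sum_(0 <= n < T) (u n - v n)| <= (2 * (minn T K + (T - N.+1)))%:R.
Proof.
move=> u1 v1 uv; elim: T => [|T IH]; first by rewrite big_geq // normr0 ler0n.
rewrite big_nat_recr //=; apply: le_trans (ler_normD _ _) _.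
have [/andP[KT TN]|out] := boolP (K <= T <= N)%N.
  by rewrite uv ?KT // subrr normr0 addr0; apply: le_trans IH _; rewrite ler_nat; lia.
have uv2 : `|u T - v T| <= 2%:R by apply: le_trans (ler_normB _ _) _; rewrite mulr2n lerD.
apply: le_trans (lerD IH uv2) _; rewrite -natrD ler_nat; lia.
Qed.

Lemma trit_sgz (R : realDomainType) (x : R) : trit (sgz x).
Proof. by rewrite /trit; case: sgzP. Qed.

Lemma norm_trit_mul_le1 (R : numDomainType) (v : int) (x : R) :
  trit v -> `|x| <= 1 -> `|v%:~R * x| <= 1.
Proof.
by move=> /or3P[] /eqP -> x1; rewrite normrM -intr_norm /= ?mul0r ?mul1r.
Qed.

Local Open Scope classical_set_scope.
Local Open Scope ring_scope.
Theorem mainTheorem7 (R : realType) :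
  exists C : R, 0 < C /\
  forall (tau : nat -> R) (q : nat -> nat),
    (forall n, (1 <= n)%N -> 0 < tau n) ->
    (forall m n, (1 <= m <= n)%N -> tau n <= tau m) ->
    tau @ \oo --> (0 : R) ->
    (2 <= q 1)%N ->
    (forall k, (1 <= k)%N -> (q k < q k.+1)%N) ->
    (forall k, (1 <= k)%N -> (q k ^ 4 + 3 * q k < q k.+1)%N) ->
    (forall k, (1 <= k)%N ->
       tau ((q k.+1 + 2) %/ 3)%N < ((16 * q k)%:R)^-1) ->
  forall (a : nat -> R),
    (forall n, (1 <= n)%N -> `|a n| <= 1) ->
  forall (l k M r c : nat),
    (l < 4)%N -> (1 <= k)%N ->
    (1 <= M <= Lseq q l k)%N ->
    (r <= qseq q l k)%N -> (c <= qseq q l k)%N ->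
  forall (y : nat -> int) (z : int -> int),
    inP q l y -> (forall j, trit (z j)) ->
    (forall n : nat, (qseq q l k <= n < qseq q l k.+1)%N ->
       y n = shiftR r (sseq q l k) n /\
       z n%:Z = gam a (qseq q l k * n + c)%N) ->
    `| ((qseq q l k * M)%:R)^-1 *
         \sum_(1 <= n < (qseq q l k * M).+1)
            (gfun (iter n Tmap (y, z)))%:~R * a n
       - Aqm a (qseq q l k) M r c |
    <= C * (qseq q l k)%:R / M%:R.
Proof.
exists 10; split=> // _ q _ _ _ q1 q_incr q_growth _ a a_le1 l k M r c l4 k1
  /andP[M1 ML] rQ _ y z yP z_trit yz.
have level_growth k' := @qseq_growth q l k' q1 q_incr q_growth l4.
have [Q0 _] := level_growth k k1.
have orbit_eq := @gfun_iter_level q l y level_growth yP k r k1 rQ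
  (fun n n_range => (yz n n_range).1) z _ (fun m m_range => (yz m m_range).2).
set Q := qseq q l k in Q0 rQ orbit_eq *.
set N := (Q * M)%N; set T := (Q * M + Q + r)%N.
have NQL : (N <= Q * Lseq q l k)%N by rewrite leq_pmul2l.
set F := fun n => (gfun (iter n Tmap (y, z)))%:~R * a n.
set G := fun n => (gam a (Q * ((n - r) %/ Q) + c))%:~R * a n.
have F_le1 n : (1 <= n)%N -> `|F n| <= 1.
  by move=> n1; apply: norm_trit_mul_le1 (a_le1 n n1); rewrite /gfun (iter_Tmap y z n).2.
have G_le1 n : (1 <= n)%N -> `|G n| <= 1.
  by move=> n1; apply: norm_trit_mul_le1 (a_le1 n n1); apply: trit_sgz.
rewrite /Aqm (@sum_blocks_reindex _ (fun m n => (gam a (Q * m + c))%:~R * a n)) // -/G.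
rewrite -mulrBr normrM ger0_norm ?invr_ge0 ?ler0n //.
rewrite (@big_nat_window _ F 1 N.+1 T) ?(@big_nat_window _ G (Q + r) T T) -?sumrB; try lia.
have error_bound : `|\sum_(0 <= n < T) ((if (1 <= n < N.+1)%N then F n else 0)
                                   - (if (Q + r <= n < T)%N then G n else 0))|
                   <= (10 * Q * Q)%N%:R.
  apply: le_trans (@norm_sum_sub_agree _ _ _ (Q * Q + Q + r) N T _ _ _) _.
  - by move=> n; case: ifP => [/andP[n1 _]|_]; rewrite ?normr0 ?F_le1.
  - by move=> n; case: ifP => [/andP[n1 _]|_]; rewrite ?normr0 ?G_le1 //; lia.
  - by move=> n n_range; rewrite !ifT /F /G ?orbit_eq //; lia.
  have QQ : (Q <= Q * Q)%N by rewrite leq_pmulr.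
  by rewrite ler_nat; lia.
apply: le_trans (ler_wpM2l _ error_bound) _; first by rewrite invr_ge0 ler0n.
have Q_neq0 : (Q%:R : R) != 0 by rewrite pnatr_eq0 -lt0n.
have M_neq0 : (M%:R : R) != 0 by rewrite pnatr_eq0 -lt0n.
suff -> : ((Q * M)%:R)^-1 * (10 * Q * Q)%N%:R = 10 * Q%:R / M%:R :> R by [].
by rewrite !natrM; field; rewrite M_neq0 Q_neq0.
Qed.
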